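(* Let $D\subset\mathbb{R}^d$ ($d\ge 3$) be a bounded regular domain and let $f:\partial D\to\overline{\mathbb{R}}$. Suppose $h_1,h_2$ are harmonic functions on $D$ and $k_1,k_2:D\to\mathbb{R}_+$ are real-valued non-negative superharmonic functions on $D$ such that $h_1$ converges to $f$ controlled by $k_1$ and $h_2$ converges to $f$ controlled by $k_2$. Then $h_1=h_2$ on $D$. In particular, if $u$ is a harmonic function on $D$ which converges to $0$ controlled by a real-valued non-negative superharmonic function $k$ on $D$, then $u=0$ on $D$.
   Context: Controlled convergence: for $f:\partial D\to\overline{\mathbb{R}}$ and $h,k:D\to\mathbb{R}$ with $k\ge 0$, one says $h$ converges to $f$ controlled by $k$ if for every $A\subset D$ and every $y\in\partial D\cap\overline{A}$: (1) if $\limsup_{A\ni x\to y}k(x)<\infty$ then $f(y)\in\mathbb{R}$ and $f(y)=\lim_{A\ni x\to y}h(x)$; (2) if $\lim_{A\ni x\to y}k(x)=\infty$ then $\lim_{A\ni x\to y}\frac{h(x)}{1+k(x)}=0$. *)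

From HB Require Import structures.
From mathcomp Require Import all_boot all_order all_algebra.
From mathcomp Require Import all_classical all_reals all_analysis.
Set Implicit Arguments. Unset Strict Implicit. Unset Printing Implicit Defensive.
Import Order.TTheory GRing.Theory Num.Theory.
Import numFieldNormedType.Exports.
Local Open Scope classical_set_scope.
Local Open Scope ring_scope.

(* Points of R^d are row vectors 'rV[R]_d.  The canonical norm on 'rV is the
   max norm; it induces the usual topology.  Euclidean balls are defined
   explicitly with the Euclidean norm. *)

Section Defs.
Context {R : realType} {d : nat}.
Notation V := 'rV[R]_d.

Definition enorm (x : V) : R := Num.sqrt (\sum_(i < d) (x ord0 i) ^+ 2).

Definition eball (x0 : V) (r : R) : set V := [set x | enorm (x - x0) < r].
Definition ecball (x0 : V) (r : R) : set V := [set x | enorm (x - x0) <= r].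
Definition esphere (x0 : V) (r : R) : set V := [set x | enorm (x - x0) = r].

Definition ebasis (i : 'I_d) : V := delta_mx ord0 i.
Definition pderiv (i : 'I_d) (f : V -> R) : V -> R := fun x => 'D_(ebasis i) f x.

Definition C2_on (D : set V) (f : V -> R) : Prop :=
  forall x, D x ->
    differentiable f x /\
    forall i, differentiable (pderiv i f) x /\
      forall j, {for x, continuous (pderiv j (pderiv i f))}.

Definition harmonic_on (D : set V) (h : V -> R) : Prop :=
  C2_on D h /\ forall x, D x -> \sum_(i < d) pderiv i (pderiv i h) x = 0.

Definition superharmonic_on (D : set V) (u : V -> R) : Prop :=
  (forall x, D x -> forall e : R, 0 < e -> \forall y \near x, u x - e < u y) /\
  (forall (x0 : V) (r : R) (h : V -> R), 0 < r -> ecball x0 r `<=` D ->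
     {within ecball x0 r, continuous h} -> harmonic_on (eball x0 r) h ->
     (forall y, esphere x0 r y -> h y <= u y) ->
     forall y, eball x0 r y -> h y <= u y).

Definition bdry (D : set V) : set V := closure D `\` interior D.

Definition domain (D : set V) : Prop := open D /\ connected D /\ D !=set0.

Definition bounded_set (D : set V) : Prop :=
  exists M : R, forall x, D x -> `|x| <= M.

Definition regular_domain (D : set V) : Prop :=
  domain D /\ bounded_set D /\
  forall phi : V -> R, {within bdry D, continuous phi} ->
    exists h : V -> R, harmonic_on D h /\
      forall y, bdry D y -> h @ within D (nbhs y) --> phi y.

Definition controlled_conv (D : set V) (f : V -> \bar R) (h k : V -> R) : Prop :=
  forall (A : set V) (y : V), A `<=` D -> bdry D y -> closure A y ->
    ((exists M : R, \forall x \near within A (nbhs y), k x <= M) ->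
       exists l : R, f y = l%:E /\ h @ within A (nbhs y) --> l) /\
    (k @ within A (nbhs y) --> +oo ->
       (fun x => h x / (1 + k x)) @ within A (nbhs y) --> 0).

End Defs.

From Pilot Require Import Defs.
From HB Require Import structures.
From mathcomp Require Import all_boot all_order all_algebra.
From mathcomp Require Import all_classical all_reals all_analysis.
From mathcomp Require Import ring lra.
Import Order.TTheory GRing.Theory Num.Theory.
Import numFieldNormedType.Exports.
Local Open Scope classical_set_scope.
Local Open Scope ring_scope.
Set Implicit Arguments. Unset Strict Implicit. Unset Printing Implicit Defensive.

(* By symmetry, and letting eps tend to 0, it suffices to show a + b >= 0 in D for
   a = eps k1 + eps - h1 and b = eps k2 + eps + h2.  Controlled convergence bounds a and b
   from below near each boundary point z by constants with nonnegative sum (where k_i stays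
   bounded both h_i tend to the finite value f z, elsewhere h_i = o(k_i)), and compactness of
   the boundary makes this uniform: a x + b x' >= 0 whenever x and x' are rho-close to a
   common boundary point.  The Lipschitz inf-convolution phi y = inf_x (b x + L |y - x|) is
   then a continuous boundary datum with liminf (a + phi) >= 0 and liminf (b - phi) >= 0 at
   the boundary.  If H solves the Dirichlet problem for phi, the minimum principle for
   superharmonic plus harmonic functions gives a + H >= 0 and b - H >= 0 in D.  That minimum
   principle only uses the comparison property on balls: at a minimum point with the largest
   i-th coordinate, an explicit harmonic quadratic lies below the function on a small sphere
   but above it at the centre. *)

Lemma is_derive_quadratic (R : realFieldType) (V : normedModType R) (g : V -> R)
    (y v : V) (c e : R) :
  (forall t : R, g (t *: v + y) = g y + t * c + t ^+ 2 * e) -> is_derive y v g c.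
Proof.
move=> gE.
have quotE : {near 0^', (fun t : R => c + t * e) =1
    (fun t : R => t^-1 *: ((g \o shift y) (t *: v) - g y))}.
  near=> t.
  have t0 : t != 0 by near: t; exact: nbhs_dnbhs_neq.
  have -> : g (t *: v + y) - g y = t * (c + t * e) by rewrite gE; ring.
  by rewrite scalerA mulVf // scale1r.
have lim_quot : (fun t : R => t^-1 *: ((g \o shift y) (t *: v) - g y)) @ 0^' --> c.
  apply: cvg_trans (near_eq_cvg quotE) _.
  have : (fun t : R => c + t * e) @ 0 --> c + 0 * e.
    by apply: cvgD; [exact: cvg_cst | apply: cvgMl; exact: cvg_id].
  by rewrite mul0r addr0 => lim0; exact: cvg_within_filter lim0.
by apply: DeriveDef; [apply/cvg_ex; exists c | exact: cvg_lim].
Unshelve. all: by end_near.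
Qed.

Lemma near_eq_continuous (T U : topologicalType) (f g : T -> U) (x : T) :
  (\forall y \near x, f y = g y) -> {for x, continuous g} -> {for x, continuous f}.
Proof.
move=> fg cg; rewrite /prop_for /continuous_at (nbhs_singleton fg).
by apply: cvg_trans cg; apply: near_eq_cvg; apply: filterS fg.
Qed.

Lemma near_eq_differentiable (R : numFieldType) (V W : normedModType R) (f g : V -> W) x :
  (\forall y \near x, f y = g y) -> differentiable g x -> differentiable f x.
Proof.
move=> fg dg; have fx := nbhs_singleton fg.
have fE : f \o shift x = cst (f x) + 'd g x +o_ 0 id.
  apply/eqaddoP => eps eps0.
  have /eqaddoP/(_ eps eps0) := diff_locally dg.
  have fg0 : \forall h \near (0 : V), f (h + x) = g (h + x).
    by move/nbhs0P : fg; apply: filterS => h; rewrite addrC.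
  apply: filter_app; apply: filterS fg0 => h.
  by rewrite !fctE /= fx => ->.
have dfE : 'd f x = 'd g x :> (V -> W).
  by apply: diff_unique; [exact: diff_continuous | exact: fE].
by apply/diff_locallyP; rewrite dfE; split; [exact: diff_continuous | exact: fE].
Qed.

Section HarmonicFunctions.
Variables (R : realType) (d : nat).
Local Notation V := 'rV[R]_d.

Definition enorm2 (v : V) : R := \sum_(i < d) v ord0 i ^+ 2.

Lemma enorm2_ge0 (v : V) : 0 <= enorm2 v.
Proof. by apply: sumr_ge0 => i _; exact: sqr_ge0. Qed.

Lemma sqr_coord_le_enorm2 (v : V) i : v ord0 i ^+ 2 <= enorm2 v.
Proof. by rewrite /enorm2 (bigD1 i) //= lerDl; apply: sumr_ge0 => j _; exact: sqr_ge0. Qed.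

Lemma coord_shift_ebasis (v : V) (t : R) i j :
  (t *: ebasis j + v) ord0 i = v ord0 i + t * (i == j)%:R.
Proof. by rewrite /ebasis !mxE eqxx addrC. Qed.

Lemma enorm2_shift_ebasis (v : V) (t : R) j :
  enorm2 (t *: ebasis j + v) = enorm2 v + 2 * t * v ord0 j + t ^+ 2.
Proof.
rewrite /enorm2 (eq_bigr (fun i => (v ord0 i + t * (i == j)%:R) ^+ 2)); last first.
  by move=> i _; rewrite coord_shift_ebasis.
rewrite (bigD1 j) //= [in RHS](bigD1 j) //= eqxx mulr1.
rewrite (eq_bigr (fun i => v ord0 i ^+ 2)) => [|i /negbTE ->]; last by rewrite mulr0 addr0.
ring.
Qed.

(* With t = y_i - p_i, both d t^2 and |y - p|^2 have Laplacian 2 d. *)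
Definition hquad (p : V) (i : 'I_d) (a b c : R) (y : V) : R :=
  a + b * (y - p) ord0 i + c * (d%:R * (y - p) ord0 i ^+ 2 - enorm2 (y - p)).

Definition hquad_d1 (p : V) (i : 'I_d) (b c : R) (j : 'I_d) (y : V) : R :=
  b * (i == j)%:R + c * (2 * d%:R * (y - p) ord0 i * (i == j)%:R - 2 * (y - p) ord0 j).

Definition hquad_d2 (i : 'I_d) (c : R) (j k : 'I_d) : R :=
  c * (2 * d%:R * (i == k)%:R * (i == j)%:R - 2 * (j == k)%:R).

Lemma enorm2_0 : enorm2 0 = 0.
Proof. by rewrite /enorm2 big1 // => i _; rewrite mxE expr0n. Qed.

Lemma hquad_center p i a b c : hquad p i a b c p = a.
Proof. by rewrite /hquad subrr enorm2_0 mxE; ring. Qed.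

Lemma is_derive_hquad p i a b c j y :
  is_derive y (ebasis j) (hquad p i a b c) (hquad_d1 p i b c j y).
Proof.
apply: (@is_derive_quadratic _ _ _ _ _ _ (c * (d%:R * (i == j)%:R ^+ 2 - 1))) => t.
by rewrite /hquad /hquad_d1 -!addrA coord_shift_ebasis enorm2_shift_ebasis; ring.
Qed.

Lemma is_derive_hquad_d1 p i b c j k y :
  is_derive y (ebasis k) (hquad_d1 p i b c j) (hquad_d2 i c j k).
Proof.
apply: (@is_derive_quadratic _ _ _ _ _ _ 0) => t.
by rewrite /hquad_d1 /hquad_d2 -!addrA !coord_shift_ebasis; ring.
Qed.

Lemma pderiv_hquad p i a b c j : pderiv j (hquad p i a b c) = hquad_d1 p i b c j.
Proof.
apply/funext => y.
exact: (@derive_val _ _ _ _ _ _ _ (is_derive_hquad _ _ _ _ _ _ _)).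
Qed.

Lemma pderiv_hquad_d1 p i b c j k : pderiv k (hquad_d1 p i b c j) = fun=> hquad_d2 i c j k.
Proof.
apply/funext => y.
exact: (@derive_val _ _ _ _ _ _ _ (is_derive_hquad_d1 _ _ _ _ _ _ _)).
Qed.

Lemma differentiable_sqr (f : V -> R) y :
  differentiable f y -> differentiable (fun x => f x ^+ 2) y.
Proof. by move=> df; under eq_fun do rewrite expr2; exact: differentiableM. Qed.

Lemma differentiable_coord_sub (p : V) i y : differentiable (fun x : V => (x - p) ord0 i) y.
Proof.
under eq_fun do rewrite !mxE.
exact: (differentiableB (differentiable_coord _ _ _) (differentiable_cst _ _)).
Qed.

Lemma differentiable_enorm2_sub (p : V) y : differentiable (fun x => enorm2 (x - p)) y.
Proof.
have -> : (fun x => enorm2 (x - p)) = \sum_(i < d) (fun x => (x - p) ord0 i ^+ 2).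
  by apply/funext => x; rewrite fct_sumE.
apply: differentiable_sum => i.
by apply: differentiable_sqr; exact: differentiable_coord_sub.
Qed.

Lemma differentiable_hquad p i a b c y : differentiable (hquad p i a b c) y.
Proof.
have dc := differentiable_coord_sub p i y.
apply: differentiableD; first by apply: differentiableD => //; exact: differentiableM.
apply: differentiableM => //; apply: differentiableB; last exact: differentiable_enorm2_sub.
by apply: differentiableM => //; exact: differentiable_sqr.
Qed.

Lemma differentiable_hquad_d1 p i b c j y : differentiable (hquad_d1 p i b c j) y.
Proof.
have dc k := differentiable_coord_sub p k y.
apply: differentiableD => //; apply: differentiableM => //.
by apply: differentiableB; apply: differentiableM => //; apply: differentiableM.
Qed.

Lemma harmonic_on_sub (U U' : set V) (f : V -> R) :
  U' `<=` U -> harmonic_on U f -> harmonic_on U' f.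
Proof. by move=> U'U [C2f Lf]; split=> x /U'U Ux; [exact: C2f | exact: Lf]. Qed.

Lemma harmonic_hquad (U : set V) p i a b c : harmonic_on U (hquad p i a b c).
Proof.
split=> x _.
  split=> [|j]; first exact: differentiable_hquad.
  rewrite pderiv_hquad; split=> [|k]; first exact: differentiable_hquad_d1.
  by rewrite pderiv_hquad_d1; exact: cst_continuous.
under eq_bigr do rewrite pderiv_hquad pderiv_hquad_d1.
rewrite -mulr_sumr (eq_bigr (fun j => 2 * d%:R * (i == j)%:R - 2)); last first.
  by move=> j _; rewrite eqxx mulr1; case: (i == j); rewrite ?mulr1 ?mulr0.
rewrite sumrB -mulr_sumr (bigD1 i) //= big1 => [|j /negbTE]; last by rewrite eq_sym => ->.
by rewrite eqxx sumr_const card_ord addr0 -mulr_natr mulr1n; ring.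
Qed.

Lemma harmonic_cst (U : set V) (a : R) : (0 < d)%N -> harmonic_on U (fun=> a).
Proof.
move=> d_gt0; have -> : (fun=> a) = hquad 0 (Ordinal d_gt0) a 0 0.
  by apply/funext => y; rewrite /hquad; ring.
exact: harmonic_hquad.
Qed.

Definition affine_comb (a b c : R) (f g : V -> R) (x : V) : R := a * f x + b * g x + c.

Lemma pderiv_affine_comb (f g : V -> R) a b c i y :
  differentiable f y -> differentiable g y ->
  pderiv i (affine_comb a b c f g) y = affine_comb a b 0 (pderiv i f) (pderiv i g) y.
Proof.
move=> /diff_derivable df /diff_derivable dg.
have -> : affine_comb a b c f g = a \*: f + b \*: g + cst c.
  by apply/funext => x; rewrite /affine_comb !fctE.
have daf : derivable (a \*: f) y (ebasis i) by exact: derivableZ.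
have dbg : derivable (b \*: g) y (ebasis i) by exact: derivableZ.
rewrite /pderiv deriveD ?deriveD ?deriveZ ?derive_cst /affine_comb ?addr0 //.
exact: derivableD.
Qed.

Lemma differentiable_affine_comb (f g : V -> R) a b c y :
  differentiable f y -> differentiable g y -> differentiable (affine_comb a b c f g) y.
Proof.
by move=> df dg; apply: differentiableD => //; apply: differentiableD; exact: differentiableM.
Qed.

Lemma continuous_affine_comb (f g : V -> R) a b c y :
  {for y, continuous f} -> {for y, continuous g} -> {for y, continuous (affine_comb a b c f g)}.
Proof.
move=> cf cg; apply: (@cvgD _ _ _ (nbhs y)); last exact: cvg_cst.
by apply: (@cvgD _ _ _ (nbhs y)); apply: (@cvgM _ _ (nbhs y)) => //; exact: cvg_cst.
Qed.

Lemma harmonic_affine_comb (U : set V) (f g : V -> R) a b c :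
  open U -> harmonic_on U f -> harmonic_on U g -> harmonic_on U (affine_comb a b c f g).
Proof.
move=> oU [C2f Lf] [C2g Lg].
have d1E_near i x : U x -> \forall y \near x, pderiv i (affine_comb a b c f g) y =
    affine_comb a b 0 (pderiv i f) (pderiv i g) y.
  move=> Ux; apply: filterS (open_nbhs_nbhs (conj oU Ux)) => y Uy.
  by apply: pderiv_affine_comb; [case: (C2f y Uy) | case: (C2g y Uy)].
have d2E i j y : U y -> pderiv j (pderiv i (affine_comb a b c f g)) y =
    affine_comb a b 0 (pderiv j (pderiv i f)) (pderiv j (pderiv i g)) y.
  move=> Uy; rewrite /pderiv (near_eq_derive _ (d1E_near i y Uy)).
  rewrite -[LHS]/(pderiv j (affine_comb a b 0 (pderiv i f) (pderiv i g)) y).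
  rewrite pderiv_affine_comb ?addr0 //.
  - by case: (C2f y Uy) => _ /(_ i) [].
  - by case: (C2g y Uy) => _ /(_ i) [].
split=> x Ux.
  have [dfx d2f] := C2f x Ux; have [dgx d2g] := C2g x Ux.
  split=> [|i]; first exact: differentiable_affine_comb.
  have [d1f d3f] := d2f i; have [d1g d3g] := d2g i.
  split=> [|j].
    apply: near_eq_differentiable (d1E_near i x Ux) _.
    exact: differentiable_affine_comb.
  apply: (near_eq_continuous (g := affine_comb a b 0 (pderiv j (pderiv i f))
                                                  (pderiv j (pderiv i g)))).
    by apply: filterS (open_nbhs_nbhs (conj oU Ux)) => y; exact: d2E.
  exact: continuous_affine_comb.
rewrite (eq_bigr _ (fun i _ => d2E i i x Ux)) /affine_comb big_split big_split /=.
by rewrite -!mulr_sumr Lf // Lg // !mulr0 big1 // !addr0.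
Qed.

End HarmonicFunctions.

Section LowerSemicontinuity.
Variables (R : realType) (T : topologicalType).

Definition lsc_on (D : set T) (w : T -> R) : Prop :=
  forall x, D x -> forall e, 0 < e -> \forall y \near x, w x - e < w y.

Lemma compact_uniform_param (K : set T) (P : T -> R -> Prop) : compact K ->
  (forall y c c', c' <= c -> P y c -> P y c') ->
  (forall x, K x -> exists c, \forall y \near x, P y c) ->
  exists c, forall y, K y -> P y c.
Proof.
move=> /compact_near_coveringP cK Pmono Ploc.
have [|M [_ HM]] := cK R (ninfty_nbhs R) (fun c y => P y c).
  move=> x Kx; have [cx Hx] := Ploc x Kx.
  exists ([set y | P y cx], [set c | c <= cx]); first split => //.
    exact: nbhs_ninfty_le (num_real cx).
  by case=> y c /= [Py cle]; exact: Pmono Py.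
by exists (M - 1) => y Ky; apply: HM => //; rewrite ltrBlDr ltrDl.
Qed.

Lemma compact_uniform_param_gt (K : set T) (P : T -> R -> Prop) (m : R) : compact K ->
  (forall y c c', c' <= c -> P y c -> P y c') ->
  (forall x, K x -> exists2 c, m < c & \forall y \near x, P y c) ->
  exists2 c, m < c & forall y, K y -> P y c.
Proof.
move=> /compact_near_coveringP cK Pmono Ploc.
have PK : \forall c \near m^'+, K `<=` (fun y => P y c).
  apply: (cK R (m^'+) (fun c y => P y c)) => x Kx.
  have [cx mcx Hx] := Ploc x Kx.
  exists ([set y | P y cx], [set c | c <= cx]); first split => //.
    exact: nbhs_right_le mcx.
  by case=> y c /= [Py cle]; exact: Pmono Py.
have [c [mc Kc]] := filter_ex (filterI (nbhs_right_gt m) PK).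
by exists c.
Qed.

Lemma lsc_on_attains_min (D K : set T) (w : T -> R) :
  lsc_on D w -> K `<=` D -> compact K -> K !=set0 ->
  exists2 x0, K x0 & forall y, K y -> w x0 <= w y.
Proof.
move=> wlsc KD cK [p Kp].
pose P y c := K y -> c <= w y.
have Pmono y c c' : c' <= c -> P y c -> P y c'.
  by move=> c'c Pyc Ky; apply: le_trans c'c (Pyc Ky).
have [c0 c0w] : exists c, forall y, K y -> P y c.
  apply: (compact_uniform_param (P := P)) => // x Kx; exists (w x - 1).
  by apply: filterS (wlsc x (KD x Kx) 1 ltr01) => y /ltW wy _.
have wK_lb : has_lbound (w @` K) by exists c0 => _ [y Ky <-]; exact: c0w.
have wK_ne : nonempty (w @` K) by exists (w p), p.
set m := inf (w @` K).
have m_le y : K y -> m <= w y by move=> Ky; apply: ge_inf => //; exists y.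
apply: contrapT => nomin.
have m_lt x : K x -> m < w x.
  move=> Kx; rewrite lt_neqAle m_le // andbT; apply/eqP => mx.
  by apply: nomin; exists x => // y Ky; rewrite -mx; exact: m_le.
have [c mc cw] : exists2 c, m < c & forall y, K y -> P y c.
  apply: (compact_uniform_param_gt (P := P)) => // x Kx; exists ((m + w x) / 2).
    by have := m_lt x Kx; lra.
  have e0 : 0 < (w x - m) / 2 by have := m_lt x Kx; lra.
  by apply: filterS (wlsc x (KD x Kx) _ e0) => y wy _; lra.
have : c <= m by apply: lb_le_inf => // _ [y Ky <-]; exact: cw.
lra.
Qed.

Lemma lsc_on_add_continuous (D : set T) (k G : T -> R) (eps : R) : 0 < eps ->
  lsc_on D k -> (forall x, D x -> {for x, continuous G}) ->
  lsc_on D (fun x => eps * k x + G x).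
Proof.
move=> eps0 klsc Gc x Dx e e0.
have e1 : 0 < e / (2 * eps) by rewrite divr_gt0 // mulr_gt0.
have e2 : 0 < e / 2 by rewrite divr_gt0.
have eps_e : eps * (e / (2 * eps)) = e / 2 by field; rewrite gt_eqF.
have := Gc x Dx => /cvgrPdist_lt /(_ _ e2).
apply: filter_app; apply: filterS (klsc x Dx _ e1) => y ky.
rewrite ltr_norml => /andP [_ Gy].
have : eps * (k x - e / (2 * eps)) < eps * k y by rewrite ltr_pM2l.
by rewrite mulrBr eps_e => kxy; lra.
Qed.

Lemma lsc_on_gap (D K : set T) (w : T -> R) (m : R) :
  lsc_on D w -> K `<=` D -> compact K -> (forall y, K y -> m < w y) ->
  exists2 eta, 0 < eta & forall y, K y -> m + eta <= w y.
Proof.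
move=> wlsc KD cK Km.
have [[y0 Ky0]|K0] := pselect (K !=set0); last first.
  by exists 1 => // y Ky; exfalso; apply: K0; exists y.
have [x2 Kx2 x2min] := lsc_on_attains_min wlsc KD cK (ex_intro _ y0 Ky0).
exists (w x2 - m) => [|y Ky]; first by rewrite subr_gt0; exact: Km.
by rewrite addrC subrK; exact: x2min.
Qed.

End LowerSemicontinuity.

Section EuclideanSpace.
Variables (R : realType) (d : nat).
Local Notation V := 'rV[R]_d.

Lemma norm_le_enorm (v : V) : `|v| <= enorm v.
Proof.
rewrite [leLHS]/Num.norm /= mx_normrE; apply/bigmax_leP; split=> [|[i j] _ /=].
  exact: sqrtr_ge0.
rewrite (ord1 i) /enorm -sqrtr_sqr; apply: ler_wsqrtr.
exact: (sqr_coord_le_enorm2 v).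
Qed.

Lemma esphereE (x0 : V) (r : R) y : 0 <= r -> esphere x0 r y <-> enorm2 (y - x0) = r ^+ 2.
Proof.
move=> r0; rewrite /esphere /= [enorm _](_ : _ = Num.sqrt (enorm2 (y - x0))) //.
split=> [<-|->].
  by rewrite sqr_sqrtr // enorm2_ge0.
by rewrite sqrtr_sqr ger0_norm.
Qed.

Lemma closed_esphere (x0 : V) (r : R) : 0 <= r -> closed (esphere x0 r).
Proof.
move=> r0; have -> : esphere x0 r = (fun y => enorm2 (y - x0)) @^-1` [set r ^+ 2].
  by apply/seteqP; split=> y /(esphereE _ _ r0).
apply: preimage_closed; last exact: closed_eq.
by move=> y _; apply: differentiable_continuous; exact: differentiable_enorm2_sub.
Qed.

Lemma compact_bounded_closed (A : set V) : Defs.bounded_set A -> closed A -> compact A.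
Proof.
move=> [M AM] cA; apply: bounded_closed_compact => //.
exists M; split; first exact: num_real.
by move=> x Mx y Ay; apply: le_trans (AM y Ay) _; exact: ltW.
Qed.

Lemma compact_esphere (x0 : V) (r : R) : 0 <= r -> compact (esphere x0 r).
Proof.
move=> r0; apply: compact_bounded_closed; last exact: closed_esphere.
exists (`|x0| + r) => y ey.
rewrite -[y](subrK x0) (le_trans (ler_normD _ _)) // addrC lerD2l.
by apply: le_trans (norm_le_enorm _) _; rewrite ey.
Qed.

Lemma compact_esphere_cap (x0 : V) i (r s : R) :
  0 <= r -> compact [set y | esphere x0 r y /\ s <= (y - x0) ord0 i].
Proof.
move=> r0; apply: (subclosed_compact _ (compact_esphere (x0 := x0) r0)); last by move=> y [].
apply: closedI; first exact: closed_esphere.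
have : closed ((fun y : V => (y - x0) ord0 i : R) @^-1` [set t | s <= t]).
  apply: preimage_closed; last exact: closed_ge.
  by move=> y _; apply: differentiable_continuous; exact: differentiable_coord_sub.
by [].
Qed.

Lemma open_ecball_subset (D : set V) x : open D -> D x -> exists2 r, 0 < r & ecball x r `<=` D.
Proof.
move=> oD Dx; have /nbhs_normP [e e0 eD] : \forall y \near x, D y by exact: open_nbhs_nbhs.
exists (e / 2) => [|y xy]; first by rewrite divr_gt0.
apply: eD; rewrite /= distrC; apply: le_lt_trans (norm_le_enorm _) _.
by apply: (le_lt_trans (xy : enorm (y - x) <= e / 2)); move: e0 => /= e0; lra.
Qed.

Lemma bdryE (D : set V) : open D -> bdry D = closure D `\` D.
Proof. by move=> /interior_id oD; rewrite /bdry oD. Qed.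

Lemma compact_closure (D : set V) : Defs.bounded_set D -> compact (closure D).
Proof.
move=> [M DM]; apply: compact_bounded_closed; last exact: closed_closure.
exists (M + 1) => z /(_ _ (nbhsx_ballx z 1 ltr01)) [y [Dy zy]].
rewrite -[z](subrK y) (le_trans (ler_normD _ _)) // addrC lerD ?DM //.
by move: zy; rewrite -ball_normE /= => /ltW.
Qed.

Lemma compact_bdry (D : set V) : open D -> Defs.bounded_set D -> compact (bdry D).
Proof.
move=> oD bD; rewrite bdryE //; apply: subclosed_compact (compact_closure bD) _.
  by apply: closedI; [exact: closed_closure | exact: open_closedC].
by move=> y [].
Qed.

End EuclideanSpace.

Section MinimumPrinciple.
Variables (R : realType) (d : nat).
Local Notation V := 'rV[R]_d.

Definition liminf_bdry_ge0 (D : set V) (w : V -> R) : Prop :=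
  forall z, bdry D z -> forall e, 0 < e -> \forall y \near z, D y -> - e < w y.

Lemma liminf_bdry_ge0_le (D : set V) (w w' : V -> R) :
  (forall x, D x -> w x <= w' x) -> liminf_bdry_ge0 D w -> liminf_bdry_ge0 D w'.
Proof.
move=> ww' wbd z bz e e0; apply: filterS (wbd z bz e e0) => y wy Dy.
exact: lt_le_trans (wy Dy) (ww' y Dy).
Qed.

Lemma hquad_barrier (x0 : V) (i : 'I_d) (m r eta : R) : 0 < r -> 0 < eta ->
  exists2 a, m < a & exists b c, forall y, esphere x0 r y ->
    hquad x0 i a b c y <= (if (y - x0) ord0 i < r / (4 * d%:R) then m else m + eta).
Proof.
move=> r0 eta0.
have d1 : 1 <= (d%:R : R) by rewrite ler1n; exact: leq_ltn_trans (leq0n _) (ltn_ord i).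
set del := eta / (2 * d%:R * r ^+ 2).
have del0 : 0 < del by rewrite divr_gt0 // !mulr_gt0 ?exprn_gt0 //; lra.
exists (m + del * (r ^+ 2 / 2)); first by rewrite ltrDl mulr_gt0 // divr_gt0 // exprn_gt0.
exists (del * (d%:R * r)), del => y /(esphereE _ _ (ltW r0)) yr.
set t : R := (y - x0) ord0 i.
have -> : hquad x0 i (m + del * (r ^+ 2 / 2)) (del * (d%:R * r)) del y =
    m + del * (d%:R * (t * (r + t)) - r ^+ 2 / 2).
  by rewrite /hquad yr -/t; field.
have t_le : t ^+ 2 <= r ^+ 2 by rewrite -yr; exact: sqr_coord_le_enorm2.
clearbody t.
have [rt tr] : - r <= t /\ t <= r by split; nra.
case: ifP => [ts|_].
  rewrite gerDl pmulr_rle0 // subr_le0.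
  have [t0|t0] := leP t 0.
    apply: (@le_trans _ _ 0); last by rewrite divr_ge0 ?sqr_ge0.
    by rewrite pmulr_rle0; [nra | lra].
  have dt : d%:R * t <= r / 4.
    by move: ts; rewrite ltr_pdivlMr ?mulr_gt0 //; [nra | lra].
  by rewrite mulrA; apply: le_trans (ler_pM _ _ dt (_ : r + t <= 2 * r)) _; nra.
rewrite lerD2l (_ : eta = del * (2 * d%:R * r ^+ 2)); last first.
  by rewrite /del divfK // gt_eqF // !mulr_gt0 ?exprn_gt0 //; lra.
rewrite ler_pM2l //.
have : d%:R * (t * (r + t)) <= d%:R * (2 * r ^+ 2) by rewrite ler_pM2l; [nra | lra].
have : 0 <= r ^+ 2 by exact: sqr_ge0.
lra.
Qed.

Section OnBoundedOpenSet.
Variables (D : set V) (w : V -> R).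
Hypotheses (oD : open D) (bD : Defs.bounded_set D).
Hypotheses (wlsc : lsc_on D w) (wbd : liminf_bdry_ge0 D w).

Lemma closed_sublevel (c : R) : c < 0 -> closed [set y | D y /\ w y <= c].
Proof.
move=> c0 z clz.
have [Dz|nDz] := pselect (D z).
  split=> //; rewrite leNgt; apply/negP => cz.
  have e0 : 0 < w z - c by rewrite subr_gt0.
  have [y [[_ wyc] wzy]] := clz _ (wlsc Dz e0).
  by move: wzy; rewrite opprB addrC subrK => /(le_lt_trans wyc); rewrite ltxx.
have bz : bdry D z by rewrite bdryE //; split=> //; apply: closureS clz => y [].
have e0 : 0 < - c / 2 by rewrite divr_gt0 // oppr_gt0.
have [y [[Dy wyc] wy]] := clz _ (wbd bz e0).
by have := wy Dy; lra.
Qed.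

Lemma compact_sublevel (c : R) : c < 0 -> compact [set y | D y /\ w y <= c].
Proof.
move=> c0; apply: compact_bounded_closed; last exact: closed_sublevel.
by case: bD => M DM; exists M => y [/DM].
Qed.

Lemma lsc_on_attains_min_neg p : D p -> w p < 0 ->
  exists2 x1, D x1 & forall y, D y -> w x1 <= w y.
Proof.
move=> Dp wp0.
have sD : [set y | D y /\ w y <= w p] `<=` D by move=> y [].
have [x1 [Dx1 x1p] x1min] :=
  lsc_on_attains_min wlsc sD (compact_sublevel wp0) (ex_intro _ p (conj Dp (lexx _))).
exists x1 => // y Dy; have [wyp|/ltW pwy] := leP (w y) (w p); first exact: x1min.
exact: le_trans x1p pwy.
Qed.

Lemma min_principle_hquad (i : 'I_d) :
  (forall x0 r a b c, 0 < r -> ecball x0 r `<=` D ->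
     (forall y, esphere x0 r y -> hquad x0 i a b c y <= w y) -> a <= w x0) ->
  forall x, D x -> 0 <= w x.
Proof.
move=> cmp p Dp; rewrite leNgt; apply/negP => wp0.
(* x0 is a minimum point of w with the largest i-th coordinate, so w exceeds the minimum
   m on the cap t >= r / (4 d) of a small sphere around x0, and hquad_barrier applies. *)
have [x1 Dx1 x1min] := lsc_on_attains_min_neg Dp wp0.
set m := w x1; have m0 : m < 0 := le_lt_trans (x1min p Dp) wp0.
have [x0 /set_mem [Dx0 wx0m] x0max] : exists2 x0, x0 \in [set y | D y /\ w y <= m] &
    forall y, y \in [set y | D y /\ w y <= m] -> y ord0 i <= x0 ord0 i.
  apply: compact_EVT_max; [by exists x1 | exact: compact_sublevel |].
  by apply: continuous_subspaceT; exact: coord_continuous.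
have wx0 : w x0 = m by apply/eqP; rewrite eq_le wx0m x1min.
have [r r0 ecD] := open_ecball_subset oD Dx0.
have esD y : esphere x0 r y -> D y by move=> ey; apply: ecD; rewrite /ecball /= ey.
have [eta eta0 eta_le] : exists2 eta, 0 < eta & forall y, esphere x0 r y ->
    r / (4 * d%:R) <= (y - x0) ord0 i -> m + eta <= w y.
  set K := [set y | esphere x0 r y /\ r / (4 * d%:R) <= (y - x0) ord0 i].
  have cK : compact K by apply: compact_esphere_cap; exact: ltW.
  have Km y : K y -> m < w y.
    move=> [ey sy]; have Dy := esD y ey.
    rewrite lt_neqAle x1min // andbT; apply/eqP => my.
    have sig0 : 0 < r / (4 * d%:R).
      by rewrite divr_gt0 // mulr_gt0 // ltr0n; exact: leq_ltn_trans (leq0n _) (ltn_ord i).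
    have Sy : [set y | D y /\ w y <= m] y by split; rewrite // -my.
    by have := x0max y (mem_set Sy); move: sy; rewrite !mxE; lra.
  have KD : K `<=` D by move=> y [/esD].
  have [eta eta0 eta_le] := lsc_on_gap wlsc KD cK Km.
  by exists eta => // y ey sy; exact: eta_le.
have [a ma [b [c qw]]] := hquad_barrier x0 i m r0 eta0.
suff : a <= w x0 by rewrite wx0; lra.
apply: cmp r0 ecD _ => y ey; apply: le_trans (qw y ey) _.
case: ifP => [_|/negbT]; first exact/x1min/esD.
by rewrite -leNgt => /(eta_le y ey).
Qed.

End OnBoundedOpenSet.

Lemma min_principle (D : set V) (k G : V -> R) (eps : R) :
  (0 < d)%N -> open D -> Defs.bounded_set D -> 0 < eps ->
  superharmonic_on D k -> harmonic_on D G ->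
  liminf_bdry_ge0 D (fun x => eps * k x + G x) ->
  forall x, D x -> 0 <= eps * k x + G x.
Proof.
move=> d_gt0 oD bD eps0 [klsc kcmp] hG wbd.
have Gc x : D x -> {for x, continuous G}.
  by move=> Dx; apply: differentiable_continuous; case: hG => /(_ x Dx) [].
set i := Ordinal d_gt0.
apply: (min_principle_hquad oD bD (lsc_on_add_continuous eps0 klsc Gc) wbd (i := i)).
move=> x0 r a b c r0 ecD qw.
set h := affine_comb eps^-1 (- eps^-1) 0 (hquad x0 i a b c) G.
have hE y : h y = (hquad x0 i a b c y - G y) / eps by rewrite /h /affine_comb; ring.
have eD : eball x0 r `<=` D by move=> y /ltW; exact: ecD.
have hh : harmonic_on (eball x0 r) h.
  by apply: harmonic_on_sub eD _; apply: harmonic_affine_comb => //; exact: harmonic_hquad.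
have hc : {within ecball x0 r, continuous h}.
  apply: continuous_in_subspaceT => y /set_mem /ecD Dy.
  apply: differentiable_continuous; apply: differentiable_affine_comb.
    exact: differentiable_hquad.
  by case: hG => /(_ y Dy) [].
have hk y : esphere x0 r y -> h y <= k y.
  by move=> ey; rewrite hE ler_pdivrMr // mulrC; have := qw y ey; lra.
have ex0 : eball x0 r x0 by rewrite /eball /= subrr /enorm -/(enorm2 0) enorm2_0 sqrtr0.
have := kcmp x0 r h r0 ecD hc hh hk x0 ex0.
by rewrite hE hquad_center ler_pdivrMr // mulrC; lra.
Qed.

End MinimumPrinciple.

Lemma not_near_closure (T : topologicalType) (P : T -> Prop) z :
  ~ (\forall x \near z, P x) -> closure [set x | ~ P x] z.
Proof.
move=> nP B zB; apply: contrapT => AB0; apply: nP.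
by apply: filterS zB => x Bx; apply: contrapT => nPx; apply: AB0; exists x.
Qed.

Lemma not_closure_near (T : topologicalType) (A : set T) z :
  ~ closure A z -> \forall x \near z, ~ A x.
Proof.
move=> nclA; apply: contrapT => nnear; apply: nclA.
by have := not_near_closure nnear; apply: closure_subset => x /contrapT.
Qed.

Section ControlledConvergence.
Variables (R : realType) (d : nat).
Local Notation V := 'rV[R]_d.

Section OneFunction.
Variables (D : set V) (f : V -> \bar R) (h k : V -> R).
Hypotheses (hk : controlled_conv D f h k) (k_ge0 : forall x, D x -> 0 <= k x).

Lemma controlled_conv_lb (A : set V) z (c eps : R) :
  A `<=` D -> bdry D z -> closure A z -> 0 < eps ->
  (forall x, A x -> c + eps * k x < h x) -> exists2 l : R, f z = l%:E & c <= l.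
Proof.
move=> AD bz clA eps0 Ah.
(* Either k is bounded on a part of A accumulating at z, where h tends to f z, or k tends
   to +oo along A, which is incompatible with h / (1 + k) --> 0 and h > c + eps k. *)
have [[M clM]|unbdd] := pselect (exists M, closure (A `&` [set x | k x <= M]) z).
  set A' := A `&` [set x | k x <= M].
  have A'D : A' `<=` D by move=> x [/AD].
  have [l [fzl hl]] : exists l : R, f z = l%:E /\ h @ within A' (nbhs z) --> l.
    apply: (hk A'D bz clM).1; exists M.
    by rewrite near_withinE; apply: filterE => x [].
  exists l => //; rewrite leNgt; apply/negP => lc.
  have PF : ProperFilter (within A' (nbhs z)) by exact: within_nbhs_proper.
  have e0 : 0 < c - l by rewrite subr_gt0.
  have ch : \forall x \near within A' (nbhs z), c < h x.
    rewrite near_withinE; apply: filterE => x [Ax _]; apply: le_lt_trans (Ah x Ax).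
    by rewrite lerDl; apply: mulr_ge0; [exact: ltW | exact/k_ge0/AD].
  move/cvgrPdist_lt : hl => /(_ _ e0) hl.
  have [x [lhx chx]] := filter_ex (filterI hl ch).
  by move: lhx; rewrite ltr_norml => /andP [lhx _]; lra.
exfalso.
have kinf : k @ within A (nbhs z) --> +oo.
  apply/cvgryPge => M; have /not_closure_near : ~ closure (A `&` [set x | k x <= M]) z.
    by move=> clM; apply: unbdd; exists M.
  apply: filterS => x nAx Ax; rewrite leNgt; apply/negP => kM.
  by apply: nAx; split => //; exact: ltW.
have PF : ProperFilter (within A (nbhs z)) by exact: within_nbhs_proper.
have e2 : 0 < eps / 2 by rewrite divr_gt0.
have [_ /(_ kinf)/cvgrPdist_lt/(_ _ e2) hk0] := hk AD bz clA.
move/cvgryPge : kinf => /(_ ((eps / 2 - c) * 2 / eps)) kbig.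
have [x [[hx kx] Ax]] := filter_ex (filterI (filterI hk0 kbig) (withinT _ _)).
have kx0 : 0 <= k x by apply/k_ge0/AD.
have := Ah x Ax; move: hx kx.
rewrite sub0r normrN ltr_norml => /andP [_]; rewrite ltr_pdivrMr; last lra.
by rewrite ler_pdivrMr //; nra.
Qed.

Lemma controlled_conv_near_ub z (c eps : R) : bdry D z -> 0 < eps ->
  (forall l : R, f z = l%:E -> l < c) -> \forall x \near z, D x -> h x <= c + eps * k x.
Proof.
move=> bz eps0 fzc; apply: contrapT => /not_near_closure clA.
have AD : [set x | ~ (D x -> h x <= c + eps * k x)] `<=` D.
  by move=> x /= nAx; apply: contrapT => nDx; apply: nAx.
have [l fzl cl] : exists2 l : R, f z = l%:E & c <= l.
  apply: (controlled_conv_lb AD bz clA eps0) => x /= nAx.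
  by rewrite ltNge; apply/negP => hx; apply: nAx.
by have := fzc l fzl; lra.
Qed.

End OneFunction.

Lemma controlled_conv_opp (D : set V) (f : V -> \bar R) (h k : V -> R) :
  controlled_conv D f h k -> controlled_conv D (fun y => - f y)%E (fun x => - h x) k.
Proof.
move=> hk A y AD bz clA; have [bdd unbdd] := hk A y AD bz clA; split.
  by move=> /bdd [l [fl hl]]; exists (- l); split; [rewrite fl | exact: cvgN].
move=> /unbdd hk0; rewrite -oppr0.
have -> : (fun x => - h x / (1 + k x)) = (fun x => - (h x / (1 + k x))).
  by apply/funext => x; rewrite mulNr.
exact: cvgN.
Qed.

Lemma controlled_conv_near_pair (D : set V) (f : V -> \bar R) (h1 h2 k1 k2 : V -> R) z eps :
  controlled_conv D f h1 k1 -> controlled_conv D f h2 k2 ->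
  (forall x, D x -> 0 <= k1 x) -> (forall x, D x -> 0 <= k2 x) -> bdry D z -> 0 < eps ->
  exists a b : R, [/\ 0 <= a + b,
    \forall x \near z, D x -> a <= eps * k1 x + (eps - h1 x) &
    \forall x \near z, D x -> b <= eps * k2 x + (eps + h2 x)].
Proof.
move=> hk1 hk2 k1_ge0 k2_ge0 bz eps0.
have hk2N := controlled_conv_opp hk2.
have [[l fzl]|nfin] := pselect (exists l : R, f z = l%:E).
  exists (- l), l; split; first by rewrite addNr.
    apply: filterS (controlled_conv_near_ub hk1 k1_ge0 (c := l + eps) bz eps0 _).
      by move=> x hx /hx; lra.
    by move=> l'; rewrite fzl => -[<-]; lra.
  apply: filterS (controlled_conv_near_ub hk2N k2_ge0 (c := - l + eps) bz eps0 _).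
    by move=> x hx /hx; lra.
  by move=> l'; rewrite fzl => -[<-]; lra.
exists 0, 0; split; first by rewrite addr0.
  apply: filterS (controlled_conv_near_ub hk1 k1_ge0 (c := eps) bz eps0 _).
    by move=> x hx /hx; lra.
  by move=> l fzl; exfalso; apply: nfin; exists l.
apply: filterS (controlled_conv_near_ub hk2N k2_ge0 (c := eps) bz eps0 _).
  by move=> x hx /hx; lra.
by move=> l fzl; exfalso; apply: nfin; exists (- l); rewrite -[f z]oppeK fzl.
Qed.

End ControlledConvergence.

Section InfConvolution.
Variables (R : realType) (d : nat).
Local Notation V := 'rV[R]_d.
Variables (D : set V) (b : V -> R) (L : R).
Hypotheses (L_ge0 : 0 <= L) (D0 : D !=set0) (b_lb : exists C, forall x, D x -> C <= b x).

Definition inf_conv (y : V) : R := inf [set b x + L * `|y - x| | x in D].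

Lemma inf_conv_le y x : D x -> inf_conv y <= b x + L * `|y - x|.
Proof.
move=> Dx; apply: ge_inf; last by exists x.
have [C bC] := b_lb; exists C => _ [x' Dx' <-].
by apply: le_trans (bC x' Dx') _; rewrite lerDl mulr_ge0.
Qed.

Lemma inf_conv_ge y c : (forall x, D x -> c <= b x + L * `|y - x|) -> c <= inf_conv y.
Proof.
move=> cb; apply: lb_le_inf => [|_ [x Dx <-]]; last exact: cb.
by have [x Dx] := D0; exists (b x + L * `|y - x|), x.
Qed.

Lemma inf_conv_lipschitz y y' : inf_conv y <= inf_conv y' + L * `|y - y'|.
Proof.
rewrite -lerBlDr; apply: inf_conv_ge => x Dx; rewrite lerBlDr.
apply: le_trans (inf_conv_le y Dx) _; rewrite -addrA lerD2l -mulrDr ler_wpM2l //.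
by rewrite [leRHS]addrC -[y - x](subrKA y'); exact: ler_normD.
Qed.

Lemma continuous_inf_conv : continuous inf_conv.
Proof.
move=> y; apply/(@cvgrPdist_lt _ _ _ (nbhs y)) => e e0.
have e1 : 0 < e / (L + 1) by rewrite divr_gt0 // ltr_wpDl.
have : \forall y' \near y, `|y - y'| < e / (L + 1) by apply/nbhs_normP; exists (e / (L + 1)).
apply: filterS => y' yy'; have Lyy' : L * `|y - y'| < e.
  apply: le_lt_trans (_ : _ <= (L + 1) * `|y - y'|) _; first by rewrite ler_wpM2r // lerDl.
  by rewrite mulrC -ltr_pdivlMr // ltr_wpDl.
have := inf_conv_lipschitz y y'; have := inf_conv_lipschitz y' y.
by rewrite distrC ltr_norml; lra.
Qed.

End InfConvolution.

Section HarmonicSeparation.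
Variables (R : realType) (d : nat).
Local Notation V := 'rV[R]_d.

Lemma lsc_on_bounded_below (D : set V) (w : V -> R) :
  open D -> Defs.bounded_set D -> lsc_on D w ->
  (forall z, bdry D z -> exists c, \forall x \near z, D x -> c <= w x) ->
  exists2 C, 0 <= C & forall y, D y -> - C <= w y.
Proof.
move=> oD bD wlsc wbd.
have [c cw] : exists c, forall y, closure D y -> D y -> c <= w y.
  apply: (compact_uniform_param (P := fun y c => D y -> c <= w y) (compact_closure bD)).
    by move=> y c c' c'c wc Dy; apply: le_trans c'c (wc Dy).
  move=> z clz; have [Dz|nDz] := pselect (D z); last by apply: wbd; rewrite bdryE.
  by exists (w z - 1); apply: filterS (wlsc z Dz _ ltr01) => y /ltW wy _.
exists `|c| => // y Dy; apply: le_trans (cw y (subset_closure Dy) Dy).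
by rewrite lerNl -normrN ler_norm.
Qed.

Lemma bdry_uniform_radius (D : set V) (a b : V -> R) :
  open D -> Defs.bounded_set D ->
  (forall z, bdry D z -> exists ca cb : R, [/\ 0 <= ca + cb,
     \forall x \near z, D x -> ca <= a x & \forall x \near z, D x -> cb <= b x]) ->
  exists2 rho, 0 < rho & forall z x x', bdry D z -> D x -> D x' ->
    `|z - x| < rho -> `|z - x'| < rho -> 0 <= a x + b x'.
Proof.
move=> oD bD ab_loc.
pose P z rho := forall x x', D x -> D x' -> `|z - x| < rho -> `|z - x'| < rho -> 0 <= a x + b x'.
have [rho rho0 rhoP] : exists2 rho, 0 < rho & forall z, bdry D z -> P z rho.
  apply: (compact_uniform_param_gt (P := P) (compact_bdry oD bD)).
    by move=> z c c' c'c Pc x x' Dx Dx' zx zx'; apply: Pc => //; exact: lt_le_trans c'c.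
  move=> z bz; have [ca [cb [cab]]] := ab_loc z bz.
  move=> /nbhs_normP [ea ea0 ca_le] /nbhs_normP [eb eb0 cb_le].
  set e := Num.min ea eb; have e0 : 0 < e by rewrite lt_min ea0 eb0.
  have [e_ea e_eb] : e <= ea /\ e <= eb by rewrite !ge_min !lexx orbT.
  have e2 : 0 < e / 2 by rewrite divr_gt0.
  exists (e / 2) => //.
  have : \forall y \near z, `|z - y| < e / 2 by apply/nbhs_normP; exists (e / 2).
  apply: filterS => y zy x x' Dx Dx' yx yx'.
  have near_z u : `|y - u| < e / 2 -> `|z - u| < e.
    move=> yu; rewrite -[z - u](subrKA y); apply: le_lt_trans (ler_normD _ _) _; lra.
  have := ca_le x (lt_le_trans (near_z x yx) e_ea) Dx.
  have := cb_le x' (lt_le_trans (near_z x' yx') e_eb) Dx'.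
  lra.
by exists rho => // z x x' bz; exact: rhoP.
Qed.

Lemma harmonic_separation (D : set V) (a b : V -> R) (Ca Cb rho : R) :
  regular_domain D -> 0 < rho -> 0 <= Ca + Cb ->
  (forall x, D x -> - Ca <= a x) -> (forall x, D x -> - Cb <= b x) ->
  (forall z x x', bdry D z -> D x -> D x' ->
     `|z - x| < rho -> `|z - x'| < rho -> 0 <= a x + b x') ->
  exists H, [/\ harmonic_on D H, liminf_bdry_ge0 D (fun x => a x + H x)
              & liminf_bdry_ge0 D (fun x => b x - H x)].
Proof.
move=> [[_ [_ D0]] [_ dirichlet]] rho0 C0 Ca_le Cb_le ab_ge0.
(* With L rho = Ca + Cb, points x' at distance >= rho from z cannot make phi z < - a y. *)
set L := (Ca + Cb) / rho.
have L0 : 0 <= L by rewrite divr_ge0 // ltW.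
have Lrho : L * rho = Ca + Cb by rewrite /L divfK // gt_eqF.
have b_lb : exists C, forall x, D x -> C <= b x by exists (- Cb).
set phi := inf_conv D b L.
have phic : {within bdry D, continuous phi}.
  by apply: continuous_subspaceT; exact: continuous_inf_conv.
have [H [hH Hphi]] := dirichlet phi phic.
have H_near z e : bdry D z -> 0 < e -> \forall y \near z, D y -> `|phi z - H y| < e.
  by move=> bz e0; move/cvgrPdist_lt : (Hphi z bz) => /(_ _ e0); rewrite near_withinE.
exists H; split=> // z bz e e0.
  have : \forall y \near z, `|z - y| < rho by apply/nbhs_normP; exists rho.
  apply: filter_app; apply: filterS (H_near z e bz e0) => y Hy zy Dy.
  have : 0 <= a y + phi z.
    rewrite -lerBlDl sub0r; apply: (inf_conv_ge D0) => x' Dx'.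
    have [zx'|zx'] := ltP `|z - x'| rho.
      by have := ab_ge0 z y x' bz Dy Dx' zy zx'; have := mulr_ge0 L0 (normr_ge0 (z - x')); lra.
    have : Ca + Cb <= L * `|z - x'| by rewrite -Lrho ler_wpM2l.
    by have := Ca_le y Dy; have := Cb_le x' Dx'; lra.
  by move: (Hy Dy); rewrite ltr_norml => /andP []; lra.
have e2 : 0 < e / 2 by rewrite divr_gt0.
have e3 : 0 < e / 2 / (L + 1) by rewrite divr_gt0 // ltr_wpDl.
have : \forall y \near z, `|z - y| < e / 2 / (L + 1) by apply/nbhs_normP; exists (e / 2 / (L + 1)).
apply: filter_app; apply: filterS (H_near z _ bz e2) => y Hy zy Dy.
have Lzy : L * `|z - y| < e / 2.
  apply: le_lt_trans (_ : _ <= (L + 1) * `|z - y|) _; first by rewrite ler_wpM2r // lerDl.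
  by rewrite mulrC -ltr_pdivlMr // ltr_wpDl.
have := inf_conv_le L0 b_lb z Dy.
by move: (Hy Dy); rewrite ltr_norml => /andP []; rewrite -/phi; lra.
Qed.

End HarmonicSeparation.

Section Uniqueness.
Variables (R : realType) (d : nat).
Local Notation V := 'rV[R]_d.
Variables (D : set V) (f : V -> \bar R) (h1 h2 k1 k2 : V -> R).
Hypotheses (d_gt0 : (0 < d)%N) (hD : regular_domain D).
Hypotheses (hh1 : harmonic_on D h1) (hh2 : harmonic_on D h2).
Hypotheses (k1_ge0 : forall x, D x -> 0 <= k1 x) (sk1 : superharmonic_on D k1).
Hypotheses (k2_ge0 : forall x, D x -> 0 <= k2 x) (sk2 : superharmonic_on D k2).
Hypotheses (hk1 : controlled_conv D f h1 k1) (hk2 : controlled_conv D f h2 k2).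

Lemma controlled_conv_le_eps (eps : R) : 0 < eps ->
  forall x, D x -> h1 x <= h2 x + eps * (2 + k1 x + k2 x).
Proof.
move=> eps0; have [[oD _] [bD _]] := hD.
have hc h : harmonic_on D h -> forall x, D x -> {for x, continuous h}.
  by move=> [C2h _] x Dx; apply: differentiable_continuous; case: (C2h x Dx).
set a := fun x => eps * k1 x + (eps - h1 x).
set b := fun x => eps * k2 x + (eps + h2 x).
have alsc : lsc_on D a.
  apply: lsc_on_add_continuous eps0 sk1.1 _ => x Dx.
  exact: (@cvgB _ _ _ (nbhs x)) (cvg_cst _) (hc _ hh1 x Dx).
have blsc : lsc_on D b.
  apply: lsc_on_add_continuous eps0 sk2.1 _ => x Dx.
  exact: (@cvgD _ _ _ (nbhs x)) (cvg_cst _) (hc _ hh2 x Dx).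
have ab_loc z : bdry D z -> exists ca cb : R, [/\ 0 <= ca + cb,
    \forall x \near z, D x -> ca <= a x & \forall x \near z, D x -> cb <= b x].
  by move=> bz; exact: controlled_conv_near_pair hk1 hk2 k1_ge0 k2_ge0 bz eps0.
have [Ca Ca0 Ca_le] : exists2 C, 0 <= C & forall y, D y -> - C <= a y.
  by apply: lsc_on_bounded_below => // z /ab_loc [ca [cb [_ ca_le _]]]; exists ca.
have [Cb Cb0 Cb_le] : exists2 C, 0 <= C & forall y, D y -> - C <= b y.
  by apply: lsc_on_bounded_below => // z /ab_loc [ca [cb [_ _ cb_le]]]; exists cb.
have [rho rho0 ab_ge0] := bdry_uniform_radius oD bD ab_loc.
have [H [hH aH bH]] := harmonic_separation hD rho0 (addr_ge0 Ca0 Cb0) Ca_le Cb_le ab_ge0.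
have w1 : forall x, D x -> 0 <= eps * k1 x + affine_comb (-1) 1 eps h1 H x.
  apply: (min_principle d_gt0 oD bD eps0 sk1 (harmonic_affine_comb _ _ _ oD hh1 hH)).
  apply: liminf_bdry_ge0_le aH => y _.
  by rewrite [leRHS](_ : _ = a y + H y) // /a /affine_comb; ring.
have w2 : forall x, D x -> 0 <= eps * k2 x + affine_comb 1 (-1) eps h2 H x.
  apply: (min_principle d_gt0 oD bD eps0 sk2 (harmonic_affine_comb _ _ _ oD hh2 hH)).
  apply: liminf_bdry_ge0_le bH => y _.
  by rewrite [leRHS](_ : _ = b y - H y) // /b /affine_comb; ring.
move=> x Dx; move: (w1 x Dx) (w2 x Dx); rewrite /affine_comb => w1x w2x.
lra.
Qed.

Lemma controlled_conv_le x : D x -> h1 x <= h2 x.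
Proof.
move=> Dx; apply/ler_addgt0Pr => e e0.
have s0 : 0 < 2 + k1 x + k2 x by have := k1_ge0 Dx; have := k2_ge0 Dx; lra.
have := controlled_conv_le_eps (divr_gt0 e0 s0) Dx.
by rewrite mulrAC -mulrA mulfV ?gt_eqF // mulr1.
Qed.

End Uniqueness.

Lemma controlled_conv_eq (R : realType) (d : nat) (D : set 'rV[R]_d) (f : 'rV[R]_d -> \bar R)
    (h1 h2 k1 k2 : 'rV[R]_d -> R) :
  (0 < d)%N -> regular_domain D -> harmonic_on D h1 -> harmonic_on D h2 ->
  (forall x, D x -> 0 <= k1 x) -> superharmonic_on D k1 ->
  (forall x, D x -> 0 <= k2 x) -> superharmonic_on D k2 ->
  controlled_conv D f h1 k1 -> controlled_conv D f h2 k2 ->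
  forall x, D x -> h1 x = h2 x.
Proof.
move=> d_gt0 hD hh1 hh2 k1_ge0 sk1 k2_ge0 sk2 hk1 hk2 x Dx; apply/le_anti/andP; split.
  exact: (controlled_conv_le d_gt0 hD hh1 hh2 k1_ge0 sk1 k2_ge0 sk2 hk1 hk2).
exact: (controlled_conv_le d_gt0 hD hh2 hh1 k2_ge0 sk2 k1_ge0 sk1 hk2 hk1).
Qed.

Lemma controlled_conv0 (R : realType) (d : nat) (D : set 'rV[R]_d) (k : 'rV[R]_d -> R) :
  controlled_conv D (fun=> 0%E) (fun=> 0) k.
Proof.
move=> A y _ _ _; split=> [_|_]; first by exists 0; split=> //; exact: cvg_cst.
rewrite (_ : (fun x => 0 / (1 + k x)) = fun=> 0); first exact: cvg_cst.
by apply/funext => x; rewrite mul0r.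
Qed.

Theorem corollary2p4 (R : realType) (d : nat) (hd : (3 <= d)%N)
  (D : set 'rV[R]_d) (hD : regular_domain D) :
  (forall (f : 'rV[R]_d -> \bar R) (h1 h2 k1 k2 : 'rV[R]_d -> R),
     harmonic_on D h1 -> harmonic_on D h2 ->
     (forall x, D x -> 0 <= k1 x) -> superharmonic_on D k1 ->
     (forall x, D x -> 0 <= k2 x) -> superharmonic_on D k2 ->
     controlled_conv D f h1 k1 -> controlled_conv D f h2 k2 ->
     forall x, D x -> h1 x = h2 x) /\
  (forall (u k : 'rV[R]_d -> R),
     harmonic_on D u ->
     (forall x, D x -> 0 <= k x) -> superharmonic_on D k ->
     controlled_conv D (fun _ => 0%E) u k ->
     forall x, D x -> u x = 0).
Proof.
have d_gt0 : (0 < d)%N by exact: leq_trans hd.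
split=> [f h1 h2 k1 k2|u k hu k_ge0 sk hk]; first exact: controlled_conv_eq.
have hk0 : controlled_conv D (fun=> 0%E) (fun=> 0) k by exact: controlled_conv0.
exact: (controlled_conv_eq d_gt0 hD hu (harmonic_cst D 0 d_gt0) k_ge0 sk k_ge0 sk hk hk0).
Qed.
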